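(* Let $X$ be a random lifetime. (i) For all $t\in\mathcal S$, $$\overline H^w(t)\le \mu(t)\log\frac{t^2}{2\mu(t)}.$$ (ii) If the reversed hazard rate $\tau(t)$ is decreasing in $t\in\mathcal S$, then for all $t\in\mathcal S$, $$\overline H^w(t)\le \int_0^t x\,\tau(x)\,dx-\mu(t)\,\big[1+\log\tau(t)\big].$$
   Context: $X$ is an absolutely continuous non-negative random variable with density $f$, support $\mathcal S=(0,\nu)$, $\nu\le+\infty$, distribution function $F$ and reversed hazard rate $\tau(t)=f(t)/F(t)$; ''decreasing'' means non-increasing; $\log$ is the natural logarithm. Weighted past entropy: $\overline H^w(t)=-\int_0^{t}x\,\frac{f(x)}{F(t)}\log\frac{f(x)}{F(t)}\,dx$. Mean past lifetime: $\mu(t)=\mathrm{E}(X\mid X\le t)=\int_0^t x\frac{f(x)}{F(t)}\,dx$. *)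

From HB Require Import structures.
From mathcomp Require Import all_boot all_order all_algebra.
From mathcomp Require Import all_classical all_reals all_analysis.
Set Implicit Arguments. Unset Strict Implicit. Unset Printing Implicit Defensive.
Import Order.TTheory GRing.Theory Num.Theory.
Local Open Scope classical_set_scope.
Local Open Scope ring_scope.

(* Density-based description of a random lifetime with support (0, nu). *)
Section Lifetime.
Variable R : realType.
Variable f : R -> R.
Variable nu : \bar R.

Definition supp : set R := [set x | 0 < x /\ (x%:E < nu)%E].

Definition is_lifetime_density : Prop :=
  (0 < nu)%E /\
  measurable_fun setT f /\
  (forall x, supp x -> 0 < f x) /\
  (forall x, ~ supp x -> f x = 0) /\
  (\int[lebesgue_measure]_x (f x)%:E = 1)%E.

Definition cdf (t : R) : R := Rintegral lebesgue_measure `]-oo, t] f.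

Definition rhr (t : R) : R := f t / cdf t.

Definition mpl (t : R) : R :=
  Rintegral lebesgue_measure `[0, t] (fun x => x * (f x / cdf t)).

Definition wpast_entropy (t : R) : \bar R :=
  (- \int[lebesgue_measure]_(x in `[0%R, t])
       (x * (f x / cdf t) * ln (f x / cdf t))%:E)%E.

End Lifetime.

(* Both bounds come from the tangent-line inequality for the convex function
   y |-> y ln y: for every c > 0, g ln g >= g (1 + ln c) - c.  Apply it to
   g = f(x)/F(t), multiply by x and integrate over [0, t]; the left side
   integrates to -H^w(t) and the right side to mu(t) (1 + ln c) minus the
   integral of c x.  For (i) take c constant, which gives
   H^w(t) <= c t^2/2 - mu(t) (1 + ln c), and optimise at c = 2 mu(t)/t^2.
   For (ii) take c = tau(x) and lower ln tau(x) to ln tau(t), which is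
   allowed because tau is decreasing. *)
From Pilot Require Import Defs.
From HB Require Import structures.
From mathcomp Require Import all_boot all_order all_algebra.
From mathcomp Require Import all_classical all_reals all_analysis.
From mathcomp Require Import measurable_realfun lra ring.
Import Order.TTheory GRing.Theory Num.Theory numFieldNormedType.Exports.
Local Open Scope classical_set_scope.
Local Open Scope ring_scope.

Lemma measurable_inv (R : realType) : measurable_fun [set: R] (fun x : R => x^-1).
Proof.
have -> : [set: R] = ~` [set 0] `|` [set 0] by rewrite setUC setUv.
have closed0 : closed [set (0 : R^o)].
  exact/accessible_closed_set1/hausdorff_accessible/Rhausdorff.
apply/measurable_funU => //.
  by apply: open_measurable; exact: closed_openC.
split; last exact: measurable_fun_set1.
apply: open_continuous_measurable_fun; first exact: closed_openC.
by move=> x; rewrite inE /= => /eqP x0; exact: inv_continuous.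
Qed.

Lemma mul_ln_ge_tangent (R : realType) (g c : R) : 0 <= g -> 0 < c ->
  g * (1 + ln c) - c <= g * ln g.
Proof.
rewrite le_eqVlt => /predU1P[<- c0|g0 c0].
  by rewrite !mul0r add0r oppr_le0 ltW.
have cg0 : 0 < c / g by exact: divr_gt0.
have := @le_ln1Dx R (c / g - 1); rewrite addrCA subrr addr0 => /(_ ltac:(lra)).
rewrite ln_div ?posrE // => /(ler_wpM2l (ltW g0)).
rewrite mulrBr [g * (_ - 1)]mulrBr mulr1 mulrCA divff ?gt_eqF // mulr1 mulrDr mulr1.
lra.
Qed.

Section Lebesgue.
Context {R : realType}.
Local Notation mu := (@lebesgue_measure R).

Lemma measurable_le_integral (D : set R) (g h : R -> \bar R) : measurable D ->
  measurable_fun D g -> measurable_fun D h -> (forall x, D x -> (g x <= h x)%E) ->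
  (\int[mu]_(x in D) g x <= \int[mu]_(x in D) h x)%E.
Proof.
move=> mD mg mh gh.
have {}gh : {in D, forall x, (g x <= h x)%E} by move=> x /set_mem; exact: gh.
rewrite integralE [leRHS]integralE leeB //.
- apply: ge0_le_integral => //; [exact: measurable_funepos..|].
  by move=> x Dx; exact: (funepos_le gh (mem_set Dx)).
- apply: ge0_le_integral => //; [exact: measurable_funeneg..|].
  by move=> x Dx; exact: (funeneg_le gh (mem_set Dx)).
Qed.

Lemma integrableZl_EFin (D : set R) (k : R) (u : R -> R) : measurable D ->
  mu.-integrable D (EFin \o u) -> mu.-integrable D (EFin \o (fun x => k * u x)).
Proof.
by move=> mD iu; have := @integrableZl _ _ _ mu D mD k _ iu; apply: eq_integrable.
Qed.

Lemma integralZl_EFin (D : set R) (k : R) (u : R -> R) : measurable D ->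
  mu.-integrable D (EFin \o u) ->
  (\int[mu]_(x in D) (k * u x)%:E = k%:E * \int[mu]_(x in D) (u x)%:E)%E.
Proof. by move=> mD iu; under eq_integral do rewrite EFinM; exact: integralZl. Qed.

Lemma integral_itv0_id (t : R) : 0 < t ->
  (\int[mu]_(x in `[0%R, t]) x%:E = (t ^+ 2 / 2)%:E)%E.
Proof.
move=> t0.
have cF : continuous (fun x : R => x ^+ 2 / 2).
  move=> x; apply: (@continuousM _ _ (fun x : R => x ^+ 2) (fun=> 2^-1)).
    exact: exprn_continuous.
  exact: cst_continuous.
rewrite (@continuous_FTC2 R id (fun x => x ^+ 2 / 2) 0 t t0).
- by rewrite expr0n /= mul0r oppr0 adde0.
- exact: (@continuous_subspaceT R^o R^o _ (@id R) (fun x => cvg_id)).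
- split.
  + by move=> x _; apply: derivableM => //; exact: derivableX.
  + exact: cvg_at_right_filter (cF 0).
  + exact: cvg_at_left_filter (cF t).
- move=> x _ /=; rewrite derive1E deriveM //= ?deriveX //=.
  rewrite derive_cst exp_derive scaler0 add0r /= expr1.
  by rewrite /GRing.scale /= mulr1 mulrA mulVf ?mul1r // pnatr_eq0.
Qed.

Lemma integrable_itv0_id (t : R) : 0 < t ->
  mu.-integrable `[0, t] (EFin \o (fun x : R => x)).
Proof.
move=> t0; apply/integrableP; split; first exact/measurable_EFinP.
rewrite (_ : (\int[mu]_(x in _) _ = \int[mu]_(x in `[0%R, t]) x%:E)%E).
  by rewrite integral_itv0_id ?ltry.
apply: eq_integral => x; rewrite inE /= in_itv /= => /andP[x0 _].
by rewrite ger0_norm.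
Qed.

End Lebesgue.

Section LifetimeDensity.
Context {R : realType} {f : R -> R} {nu : \bar R}.
Hypothesis hf : is_lifetime_density f nu.
Local Notation mu := (@lebesgue_measure R).

Lemma density_ge0 x : 0 <= f x.
Proof.
case: hf => _ [_ [fsupp [fout _]]].
by have [/fsupp/ltW //|/fout ->] := pselect (supp nu x).
Qed.

Lemma measurable_density : measurable_fun setT f.
Proof. by case: hf => _ []. Qed.

Lemma integrable_density D : measurable D -> mu.-integrable D (EFin \o f).
Proof.
move=> mD; apply: integrableS (_ : mu.-integrable setT _) => //.
case: hf => _ [mf [_ [_ int1]]].
apply/integrableP; split; first exact/measurable_EFinP.
under eq_integral do rewrite /= ger0_norm ?density_ge0 //.
by rewrite int1 ltry.
Qed.

Lemma cdf_ge0 x : 0 <= Defs.cdf f x.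
Proof. by apply: Rintegral_ge0 => y _; exact: density_ge0. Qed.

Lemma nondecreasing_cdf : nondecreasing_fun (Defs.cdf f).
Proof.
move=> x y xy; rewrite /Defs.cdf /Rintegral.
apply: fine_le; [exact/integrable_fin_num/integrable_density..|].
apply: ge0_subset_integral => //.
- by apply/measurable_EFinP; apply: measurable_funS measurable_density.
- by move=> z _; rewrite lee_fin density_ge0.
- by apply: subset_itvl; rewrite bnd_simp.
Qed.

Lemma rhr_ge0 x : 0 <= rhr f x.
Proof. exact: divr_ge0 (density_ge0 x) (cdf_ge0 x). Qed.

Lemma measurable_rhr : measurable_fun setT (rhr f).
Proof.
apply: measurable_funM; first exact: measurable_density.
apply: measurableT_comp (measurable_inv R) _.
exact: nondecreasing_measurable nondecreasing_cdf.
Qed.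

Section PastLifetime.
Variable t : R.
Hypothesis ht : supp nu t.
Local Notation Ft := (Defs.cdf f t).

Let t_gt0 : 0 < t. Proof. by case: ht. Qed.

Lemma integrable_mpl_integrand :
  mu.-integrable `[0, t] (EFin \o (fun x => x * (f x / Ft))).
Proof.
have bounded_id : [bounded x | x in `[0, t]].
  exact/compact_bounded/segment_compact.
have m0t : measurable `[0, t] by exact: measurable_itv.
have int_g := @integrableZl_EFin _ _ (Ft^-1) f m0t (integrable_density _ m0t).
have := @integrableMr _ _ _ mu _ m0t id _ (@measurable_id _ _ _) bounded_id int_g.
by apply: eq_integrable => // x _ /=; rewrite mulrC.
Qed.

Lemma integral_mpl_integrand :
  (\int[mu]_(x in `[0%R, t]) (x * (f x / Ft))%:E = (mpl f t)%:E)%E.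
Proof.
rewrite /mpl /Rintegral fineK //.
exact/integrable_fin_num/integrable_mpl_integrand.
Qed.

Lemma mpl_ge0 : 0 <= mpl f t.
Proof.
apply: Rintegral_ge0 => x; rewrite /= in_itv /= => /andP[x0 _].
by rewrite mulr_ge0 // divr_ge0 ?density_ge0 ?cdf_ge0.
Qed.

Lemma wpast_entropy_le_tangent (a : R -> R) (b : R) :
  measurable_fun `[0, t] a -> (forall x, 0 <= x <= t -> 0 <= a x) ->
  (forall x, 0 < x <= t -> 0 < f x / Ft -> 0 < b <= a x) ->
  (wpast_entropy f t <=
     \int[mu]_(x in `[0%R, t]) (x * a x)%:E - (mpl f t * (1 + ln b))%:E)%E.
Proof.
move=> ma a_ge0 ba.
have m0t : measurable `[0%R, t] by exact: measurable_itv.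
have mxa : measurable_fun `[0%R, t] (fun x => x * a x) by exact: measurable_funM.
have mg : measurable_fun `[0%R, t] (fun x => f x / Ft).
  by apply: measurable_funM; [exact: measurable_funS measurable_density|].
have mxg := measurable_int mu integrable_mpl_integrand.
have xa_ge0 x : 0 <= x <= t -> 0 <= x * a x.
  by move=> /[dup] /andP[x0 _] /a_ge0; exact: mulr_ge0.
set I := (\int[mu]_(x in `[0%R, t]) (x * a x)%:E)%E.
have [->|Ifin] := eqVneq I +oo%E; first by rewrite addeC /= leey.
have int_xa : mu.-integrable `[0, t] (EFin \o (fun x => x * a x)).
  apply/integrableP; split; first exact/measurable_EFinP.
  rewrite (_ : (\int[mu]_(x in _) _ = I)%E) ?ltey //.
  apply: eq_integral => x; rewrite inE /= in_itv /= => x0t.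
  by rewrite ger0_norm // xa_ge0.
have I_fin : I = (fine I)%:E by rewrite fineK // integrable_fin_num.
rewrite I_fin /wpast_entropy leeNl.
have -> : (- ((fine I)%:E - (mpl f t * (1 + ln b))%:E) = \int[mu]_(x in `[0%R, t])
    ((1 + ln b) * (x * (f x / Ft)) - x * a x)%:E)%E.
  under eq_integral do rewrite EFinB.
  rewrite integralB_EFin ?integrableZl_EFin ?integrable_mpl_integrand //.
  rewrite integralZl_EFin ?integrable_mpl_integrand // integral_mpl_integrand -/I I_fin.
  by rewrite -!EFinM -!EFinB -EFinN; congr (_%:E); ring.
apply: measurable_le_integral => //.
- apply/measurable_EFinP/measurable_funB => //.
  by apply: measurable_funM => //; exact/measurable_EFinP.
- apply/measurable_EFinP/measurable_funM; first exact/measurable_EFinP.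
  by apply: measurableT_comp; [exact: measurable_ln|exact: mg].
move=> x /=; rewrite in_itv /= lee_fin => /andP[x0 xt].
have g0 : 0 <= f x / Ft by rewrite divr_ge0 ?density_ge0 ?cdf_ge0.
move: x0; rewrite le_eqVlt => /predU1P[<-|x_gt0].
  by rewrite !(mul0r, mulr0) subrr.
move: g0; rewrite le_eqVlt => /predU1P[g_eq0|g_gt0].
  by rewrite -g_eq0 !mulr0 add0r mul0r oppr_le0 xa_ge0 // (ltW x_gt0) xt.
have /andP[b_gt0 b_le] : 0 < b <= a x by apply: ba; rewrite ?x_gt0.
have tangent : f x / Ft * (1 + ln (a x)) - a x <= f x / Ft * ln (f x / Ft).
  by apply: mul_ln_ge_tangent; [exact: ltW|exact: lt_le_trans b_le].
have ln_le : ln b <= ln (a x) by rewrite ler_ln ?posrE // (lt_le_trans b_gt0).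
have := ler_wpM2l (ltW (mulr_gt0 x_gt0 g_gt0)) ln_le.
have := ler_wpM2l (ltW x_gt0) tangent.
nra.
Qed.

Lemma wpast_entropy_le_cst (c : R) : 0 < c ->
  (wpast_entropy f t <= (c * (t ^+ 2 / 2) - mpl f t * (1 + ln c))%:E)%E.
Proof.
move=> c0; apply: le_trans (wpast_entropy_le_tangent (fun=> c) c _ _ _) _.
- exact: measurable_cst.
- by move=> x _; exact: ltW.
- by move=> x _ _; rewrite c0 lexx.
under eq_integral do rewrite mulrC.
rewrite (integralZl_EFin _ _ id) ?integrable_itv0_id //.
by rewrite integral_itv0_id // -EFinM -EFinB.
Qed.

Lemma wpast_entropy_le_mpl :
  (wpast_entropy f t <= (mpl f t * ln (t ^+ 2 / (2 * mpl f t)))%:E)%E.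
Proof.
have t2_gt0 : 0 < t ^+ 2 by exact: exprn_gt0.
(* If mu(t) = 0 the bound reads 0 (as t^2/0 = 0), reached by letting c -> 0. *)
have [mpl0|mpl_neq0] := eqVneq (mpl f t) 0.
  rewrite mpl0 mul0r; apply/lee_addgt0Pr => e e_gt0.
  have c_gt0 : 0 < 2 * e / t ^+ 2 by rewrite divr_gt0 ?mulr_gt0.
  apply: le_trans (wpast_entropy_le_cst _ c_gt0) _.
  rewrite mpl0 mul0r subr0 add0e lee_fin.
  suff -> : 2 * e / t ^+ 2 * (t ^+ 2 / 2) = e by [].
  by field; rewrite gt_eqF.
have mpl_gt0 : 0 < mpl f t by rewrite lt_neqAle eq_sym mpl_neq0 mpl_ge0.
have c_gt0 : 0 < 2 * mpl f t / t ^+ 2 by rewrite divr_gt0 ?mulr_gt0.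
apply: le_trans (wpast_entropy_le_cst _ c_gt0) _.
have -> : 2 * mpl f t / t ^+ 2 * (t ^+ 2 / 2) = mpl f t by field; rewrite gt_eqF.
rewrite -[t ^+ 2 / _]invf_div lnV ?posrE // lee_fin.
by rewrite (_ : _ - _ = mpl f t * - ln (2 * mpl f t / t ^+ 2)) //; ring.
Qed.

Lemma wpast_entropy_le_rhr :
  (forall x y, supp nu x -> supp nu y -> x <= y -> rhr f y <= rhr f x) ->
  (wpast_entropy f t <= \int[mu]_(x in `[0%R, t]) (x * rhr f x)%:E
                         - (mpl f t * (1 + ln (rhr f t)))%:E)%E.
Proof.
move=> rhr_decr; apply: wpast_entropy_le_tangent.
- exact: measurable_funS measurable_rhr.
- by move=> x _; exact: rhr_ge0.
move=> x /andP[x_gt0 xt] g_gt0.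
have Ft_gt0 : 0 < Ft.
  rewrite lt_neqAle eq_sym cdf_ge0 andbT; apply: contraTneq g_gt0 => ->.
  by rewrite invr0 mulr0 ltxx.
have supp_x : supp nu x.
  by split => //; apply: le_lt_trans (proj2 ht); rewrite lee_fin.
case: hf => _ [_ [fsupp _]].
by rewrite divr_gt0 ?fsupp //= rhr_decr.
Qed.

End PastLifetime.
End LifetimeDensity.

Theorem theorem3p4 (R : realType) (f : R -> R) (nu : \bar R) :
  is_lifetime_density f nu ->
  (forall t, supp nu t ->
     (wpast_entropy f t <= (mpl f t * ln (t ^+ 2 / (2 * mpl f t)))%:E)%E) /\
  ((forall x y, supp nu x -> supp nu y -> x <= y -> rhr f y <= rhr f x) ->
   forall t, supp nu t ->
     (wpast_entropy f t <=
        \int[lebesgue_measure]_(x in `[0%R, t]) (x * rhr f x)%:E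
        - (mpl f t * (1 + ln (rhr f t)))%:E)%E).
Proof.
move=> hf; split=> [t ht|rhr_decr t ht].
- exact: wpast_entropy_le_mpl hf t ht.
- exact: wpast_entropy_le_rhr hf t ht rhr_decr.
Qed.
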